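(* Let $\tilde L$ be a minimum-size counterexample. Then every element $x\in\tilde L\setminus\{0_{\tilde L},1_{\tilde L}\}$ is incomparable with at least three elements of $\tilde L$.
   Context: For a poset $P$, $x$ upper covers $y$ if $y<x$ with nothing strictly between; join-irreducible: upper covers exactly one element. For $x\in P$, ${\uparrow}x=\{y: x\le y\}$. $0_{\tilde L}$, $1_{\tilde L}$ are the least and greatest elements. A counterexample is a finite lattice $L$ with $|L|>1$ in which every join-irreducible $j$ satisfies $|{\uparrow}j|>|L|/2$; a minimum-size counterexample is a counterexample $\tilde L$ such that no counterexample has fewer elements. *)

From mathcomp Require Import all_boot all_order.
Set Implicit Arguments. Unset Strict Implicit. Unset Printing Implicit Defensive.
Import Order.TTheory.
Local Open Scope order_scope.

Definition covers (d : Order.disp_t) (L : finLatticeType d) (x y : L) : Prop :=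
  y < x /\ forall z : L, ~ (y < z /\ z < x).

Definition join_irreducible (d : Order.disp_t) (L : finLatticeType d) (j : L) : Prop :=
  exists y : L, covers j y /\ forall y' : L, covers j y' -> y' = y.

Definition upset (d : Order.disp_t) (L : finLatticeType d) (x : L) : {set L} :=
  [set y : L | x <= y].

Definition counterexample (d : Order.disp_t) (L : finLatticeType d) : Prop :=
  (1 < #|L|)%N /\
  forall j : L, join_irreducible j -> (#|L| < 2 * #|upset j|)%N.

Definition min_counterexample (d : Order.disp_t) (L : finLatticeType d) : Prop :=
  counterexample L /\
  forall (d' : Order.disp_t) (L' : finLatticeType d'),
    counterexample L' -> (#|L| <= #|L'|)%N.

Definition incomparables (d : Order.disp_t) (L : finLatticeType d) (x : L) : {set L} :=
  [set y : L | ~~ (x >=< y)].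

(* Suppose x, neither bottom nor top of a minimum counterexample L, has at most
   two incomparable elements.  Its up-set is a smaller lattice with at least two
   elements, hence not a counterexample: some k > x is join-irreducible there
   with 2|up k| <= |up x|.  As k is not join-irreducible in L, it covers some v
   incomparable to x, and k = x \/ v.  Among v and the other element
   incomparable to x (if any) there is a join-irreducible j of L with
   x \/ v <= x \/ j and up j contained in S :|: up (x \/ j), where S is a set
   of incomparable elements with pairwise distinct meets with x.  The elements
   of S and their meets with x all lie outside up x, so
   |L| >= 2|S| + |up x| >= 2|S| + 2|up (x \/ j)| >= 2|up j|,
   contradicting the counterexample property. *)
From HB Require Import structures.
From mathcomp Require Import all_boot all_order.
From mathcomp Require Import zify.
From Stdlib Require Import Classical.
Set Implicit Arguments. Unset Strict Implicit. Unset Printing Implicit Defensive.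
Import Order.TTheory.
Local Open Scope order_scope.

Lemma injective_in_subset2 (T : finType) (U : eqType) (f : T -> U) (S : {set T}) a b :
  S \subset [set a; b] -> (a != b -> f a != f b) -> {in S &, injective f}.
Proof.
move=> /subsetP sS fab s t /sS /set2P[]-> /sS /set2P[]-> //.
all: have [-> // | ab] := eqVneq a b; move/eqP.
all: by rewrite ?(eq_sym (f b)) (negbTE (fab ab)).
Qed.

Section LatticeCounting.
Context {d : Order.disp_t} {L : finLatticeType d}.
Implicit Types (a j k p q t v w x y : L).

Lemma in_incomparables x t : (t \in incomparables x) = ~~ (x <= t) && ~~ (t <= x).
Proof. by rewrite inE /Order.comparable negb_or. Qed.

Lemma in_upset x t : (t \in upset x) = (x <= t).
Proof. by rewrite inE. Qed.

Lemma le_or_incomparable x t : [\/ x <= t, t <= x | t \in incomparables x].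
Proof.
rewrite in_incomparables; have [xt | nxt] := boolP (x <= t); first by constructor 1.
have [tx | ntx] := boolP (t <= x); first by constructor 2.
by constructor 3; apply/andP.
Qed.

Lemma card_upset_le x y : x <= y -> (#|upset y| <= #|upset x|)%N.
Proof.
move=> xy; apply: subset_leq_card; apply/subsetP => t; rewrite !in_upset.
exact: le_trans.
Qed.

Lemma card_upset_lt x y : ~~ (x <= y) -> (#|upset x| < #|L|)%N.
Proof.
move=> nxy; have := max_card (x `&` y |: upset x).
by rewrite cardsU1 in_upset lexI lexx (negbTE nxy).
Qed.

Lemma card_upset_gt1 x y : ~~ (y <= x) -> (1 < #|upset x|)%N.
Proof.
move=> nyx; have xxy : x != x `|` y by apply: contra nyx => /eqP ->; exact: leUr.
have := cards2 x (x `|` y); rewrite xxy => <-.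
by apply: subset_leq_card; apply/subsetP => z /set2P[] ->; rewrite in_upset ?leUl.
Qed.

Lemma join_irreducible_max_below a w :
  a < w -> (forall t, t < w -> t <= a) -> join_irreducible w.
Proof.
move=> aw below; exists a; split.
  split=> // z [az zw]; by move: (lt_le_trans az (below z zw)); rewrite ltxx.
move=> y [yw ycov]; have ya := below y yw.
apply/eqP; rewrite eq_le ya /=; apply: contraT => nay.
by case: (ycov a); rewrite lt_leAnge ya nay.
Qed.

Lemma join_irreducible_least_incomparable x v : v \in incomparables x ->
  (forall t, t \in incomparables x -> ~~ (t < v)) -> join_irreducible v.
Proof.
rewrite in_incomparables => /andP[nxv nvx] least.
apply: (@join_irreducible_max_below (x `&` v)) => [|t tv].
  by rewrite lt_leAnge leIr; apply: contra nvx => /le_trans; apply; exact: leIl.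
case: (le_or_incomparable x t) => [xt | tx | tI].
- by move: nxv; rewrite (le_trans xt (ltW tv)).
- by rewrite lexI tx (ltW tv).
- by move: (least t tI); rewrite tv.
Qed.

Lemma join_cover_incomparable x k v :
  covers k v -> x <= k -> ~~ (x <= v) -> x `|` v = k.
Proof.
move=> [vk vcov] xk nxv; apply/eqP; rewrite eq_le leUx xk (ltW vk) /=.
apply: contraT => nk; case: (vcov (x `|` v)); split.
  by rewrite lt_leAnge leUr; apply: contra nxv; apply: le_trans; exact: leUl.
by rewrite lt_leAnge leUx xk (ltW vk).
Qed.

Lemma upset_subset_incomparables_join x j : ~~ (j <= x) ->
  upset j \subset (incomparables x :&: upset j) :|: upset (x `|` j).
Proof.
move=> njx; apply/subsetP => t jt; rewrite in_setU in_setI jt andbT.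
move: jt; rewrite in_upset => jt.
case: (le_or_incomparable x t) => [xt | tx | -> //].
- by rewrite in_upset leUx xt jt orbT.
- by move: njx; rewrite (le_trans jt tx).
Qed.

(* The elements of S, their meets with x and the elements above x are three
   pairwise disjoint sets. *)
Lemma card_incomparables_meet x (S : {set L}) : S \subset incomparables x ->
  {in S &, injective (fun t => x `&` t)} -> (2 * #|S| + #|upset x| <= #|L|)%N.
Proof.
move=> /subsetP SI inj; set M := [set x `&` t | t in S].
have cardM : #|M| = #|S| by exact: card_in_imset.
have cardU (A B : {set L}) : [disjoint A & B] -> #|A :|: B| = (#|A| + #|B|)%N.
  by move=> AB; rewrite cardsU disjoint_setI0 // cards0 subn0.
have notin_upset t : ~~ (x <= t) -> x `&` t \notin upset x.
  by move=> nxt; rewrite in_upset; apply: contra nxt => /le_trans; apply; exact: leIr.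
have SM : [disjoint S & M].
  rewrite disjoint_subset; apply/subsetP => t /SI.
  rewrite in_incomparables inE => /andP[_ ntx].
  by apply: contra ntx => /imsetP[s _ ->]; exact: leIl.
have SMup : [disjoint S :|: M & upset x].
  rewrite disjoint_subset; apply/subsetP => t; rewrite [t \in predC _]inE.
  case/setUP => [/SI | /imsetP[s /SI sI ->]].
    by rewrite in_incomparables in_upset => /andP[].
  by move: sI; rewrite in_incomparables => /andP[/notin_upset].
by have := max_card (S :|: M :|: upset x); rewrite !cardU // cardM addnn -mul2n.
Qed.

Section MinimalCounterexample.
Hypothesis upset_join_irreducible_large :
  forall j : L, join_irreducible j -> (#|L| < 2 * #|upset j|)%N.

Lemma join_irreducible_join_upset_large x j : join_irreducible j -> ~~ (j <= x) ->
  {in incomparables x :&: upset j &, injective (fun t => x `&` t)} ->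
  (#|upset x| < 2 * #|upset (x `|` j)|)%N.
Proof.
move=> Jj njx inj; set S := incomparables x :&: upset j.
have := card_incomparables_meet (subsetIl _ _) inj.
have := leq_trans (subset_leq_card (upset_subset_incomparables_join njx))
  (leq_card_setU _ _).
have := upset_join_irreducible_large Jj; rewrite -/S; lia.
Qed.

Lemma isolated_incomparable_join_upset_large x v : v \in incomparables x ->
  (forall t, t \in incomparables x -> ~~ (t < v) && ~~ (v < t)) ->
  (#|upset x| < 2 * #|upset (x `|` v)|)%N.
Proof.
move=> vI isolated.
have Jv : join_irreducible v.
  apply: (join_irreducible_least_incomparable vI) => t tI.
  by case/andP: (isolated t tI).
apply: join_irreducible_join_upset_large Jv _ _.
  by move: vI; rewrite in_incomparables => /andP[].
apply: (@injective_in_subset2 _ _ _ _ v v); last by rewrite eqxx.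
apply/subsetP => t; rewrite in_setI in_upset => /andP[tI vt].
have /andP[_] := isolated t tI; rewrite [v < t]lt_leAnge vt negbK => tv.
by rewrite !inE eq_le tv vt.
Qed.

Section FewIncomparables.
Variable x : L.
Hypothesis few_incomparables : (#|incomparables x| <= 2)%N.

Lemma incomparables_pair p q t : p \in incomparables x -> q \in incomparables x ->
  p != q -> t \in incomparables x -> t = p \/ t = q.
Proof.
move=> pI qI pq tI; have [-> | tp] := eqVneq t p; first by left.
have [-> | tq] := eqVneq t q; first by right.
suff : (3 <= #|incomparables x|)%N by rewrite leqNgt ltnS few_incomparables.
have <- : #|t |: [set p; q]| = 3%N by rewrite cardsU1 cards2 pq !inE (negbTE tp) (negbTE tq).
by apply: subset_leq_card; apply/subsetP => s /setU1P[-> | /set2P[] ->].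
Qed.

Section ComparablePair.
Variables p q : L.
Hypotheses (pI : p \in incomparables x) (qI : q \in incomparables x) (pq : p < q).

Let other t : t \in incomparables x -> t = p \/ t = q.
Proof. by apply: incomparables_pair; rewrite // lt_eqF. Qed.

Lemma join_irreducible_upper_incomparable : x `&` q <= p -> join_irreducible q.
Proof.
move=> xqp; apply: (join_irreducible_max_below pq) => t tq.
move: qI; rewrite in_incomparables => /andP[nxq _].
case: (le_or_incomparable x t) tq => [xt tq | tx tq | /other[]-> tq].
- by move: nxq; rewrite (le_trans xt (ltW tq)).
- by apply: le_trans xqp; rewrite lexI tx (ltW tq).
- exact: lexx.
- by rewrite ltxx in tq.
Qed.

Lemma le_join_lower_incomparable : ~~ (x `&` q <= p) -> q <= x `|` p.
Proof.
move=> nxqp; set m := q `&` (x `|` p).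
apply: contraT => nq; have mq : m < q.
  by rewrite lt_leAnge leIl; apply: contra nq => /le_trans; apply; exact: leIr.
move: pI qI; rewrite !in_incomparables => /andP[_ npx] /andP[nxq _].
case: (le_or_incomparable x m) => [xm | mx | /other[] mE].
- by move: nxq; rewrite (le_trans xm (ltW mq)).
- by move: npx; rewrite (le_trans _ mx) // lexI (ltW pq) leUr.
- have : x `&` q <= m by rewrite lexI leIr (le_trans (leIl _ _) (leUl _ _)).
  by rewrite mE (negbTE nxqp).
- by rewrite mE ltxx in mq.
Qed.

Lemma comparable_incomparables_join_upset_large :
  (#|upset x| < 2 * #|upset (x `|` q)|)%N.
Proof.
move: (pI) (qI); rewrite !in_incomparables => /andP[_ npx] /andP[_ nqx].
have [xqp | nxqp] := boolP (x `&` q <= p).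
  apply: join_irreducible_join_upset_large => //.
  - exact: join_irreducible_upper_incomparable.
  - apply: (@injective_in_subset2 _ _ _ _ q q); last by rewrite eqxx.
    apply/subsetP => t; rewrite in_setI in_upset => /andP[/other[]-> qt].
      by move: pq; rewrite lt_leAnge qt andbF.
    by rewrite !inE eqxx.
have Jp : join_irreducible p.
  apply: (join_irreducible_least_incomparable pI) => t /other[]->.
    by rewrite ltxx.
  by rewrite lt_gtF.
have xqxp : x `|` q <= x `|` p by rewrite leUx leUl le_join_lower_incomparable.
apply: leq_trans (join_irreducible_join_upset_large Jp npx _) _.
  apply: (@injective_in_subset2 _ _ _ _ p q).
    by apply/subsetP => t; rewrite in_setI => /andP[/other[]-> _]; rewrite !inE eqxx ?orbT.
  by move=> _; apply: contra nxqp => /eqP <-; exact: leIr.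
by rewrite leq_mul2l card_upset_le.
Qed.

End ComparablePair.

Lemma incomparable_join_upset_large v : v \in incomparables x ->
  (#|upset x| < 2 * #|upset (x `|` v)|)%N.
Proof.
move=> vI.
case: (pickP (fun t => (t \in incomparables x) && ((t < v) || (v < t))));
  last first.
  move=> isolated; apply: isolated_incomparable_join_upset_large => // t tI.
  by move: (isolated t); rewrite tI /= => /negbT; rewrite negb_or.
move=> t /andP[tI /orP[tv | vt]].
  exact: comparable_incomparables_join_upset_large tv.
apply: leq_trans (comparable_incomparables_join_upset_large vI tI vt) _.
by rewrite leq_mul2l card_upset_le // leUx leUl (le_trans (ltW vt) (leUr _ _)).
Qed.

End FewIncomparables.
End MinimalCounterexample.
End LatticeCounting.

Lemma not_counterexample_small_upset (d : Order.disp_t) (M : finLatticeType d) :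
  (1 < #|M|)%N -> ~ counterexample M ->
  exists2 k : M, join_irreducible k & (2 * #|upset k| <= #|M|)%N.
Proof.
move=> nontrivial notCE; apply: NNPP => none; apply: notCE; split=> // j Jj.
by rewrite ltnNge; apply/negP => small; apply: none; exists j.
Qed.

Section UpsetSublattice.
Context {d : Order.disp_t} {L : finLatticeType d} (x : L).

Definition uplattice : predArgType := {y : L | x <= y}.
HB.instance Definition _ := SubType.on uplattice.
HB.instance Definition _ := Finite.on uplattice.

Lemma uplattice_meet_closed : meet_closed (fun y : L => x <= y).
Proof. by move=> a b; rewrite !unfold_in /= => xa xb; rewrite lexI xa xb. Qed.

Lemma uplattice_join_closed : join_closed (fun y : L => x <= y).
Proof. by move=> a b; rewrite !unfold_in /= => xa _; rewrite (le_trans xa (leUl _ _)). Qed.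

HB.instance Definition _ := Order.SubChoice_isSubLattice.Build d L
  (fun y : L => x <= y) d uplattice uplattice_meet_closed uplattice_join_closed.

End UpsetSublattice.

Section UpsetSublatticeTheory.
Context {d : Order.disp_t} {L : finLatticeType d} {x : L}.

Lemma card_uplattice : #|uplattice x| = #|upset x|.
Proof. by rewrite card_sig; apply: eq_card => y; rewrite !inE. Qed.

Lemma card_upset_uplattice (k : uplattice x) : #|upset k| = #|upset (val k)|.
Proof.
have -> : upset (val k) = [set val z | z in upset k].
  apply/setP => y; rewrite in_upset; apply/idP/imsetP => [ky | [z kz ->]].
    by exists (exist _ y (le_trans (valP k) ky)); rewrite ?in_upset.
  by rewrite in_upset in kz.
by rewrite card_imset //; exact: val_inj.
Qed.

Lemma covers_uplattice (a b : uplattice x) : covers b a <-> covers (val b) (val a).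
Proof.
split=> [[ab acov] | [ab acov]]; split=> // z [az zb].
  by case: (acov (exist _ z (le_trans (valP a) (ltW az)))).
by case: (acov (val z)).
Qed.

Lemma not_join_irreducible_val (k : uplattice x) :
  join_irreducible k -> ~ join_irreducible (val k) ->
  exists2 v, v \in incomparables x & covers (val k) v.
Proof.
move=> [c [ck cuniq]] notJ; apply: NNPP => noinc; apply: notJ.
have xk : x < val k.
  by apply: le_lt_trans (valP c) _; case: (covers_uplattice c k) => /(_ ck)[].
exists (val c); split; first by move/covers_uplattice: ck.
move=> y ky; have xy : x <= y.
  case: (le_or_incomparable x y) => [// | yx | yI]; last by case: noinc; exists y.
  have [-> // | neq] := eqVneq y x.
  by case: (proj2 ky x); rewrite lt_neqAle neq yx.
by rewrite -(cuniq (exist _ y xy)) //; apply/covers_uplattice.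
Qed.

End UpsetSublatticeTheory.

Theorem corollary2p14 (d : Order.disp_t) (L : finLatticeType d) :
  min_counterexample L ->
  forall x : L,
    ~ (forall y : L, x <= y) ->   (* x is not the least element 0_L *)
    ~ (forall y : L, y <= x) ->   (* x is not the greatest element 1_L *)
    (3 <= #|incomparables x|)%N.
Proof.
move=> [[_ JI_large] minimal] x not_bottom not_top.
rewrite leqNgt ltnS; apply/negP => few.
have [y0 /negP xy0] := not_all_ex_not _ _ not_bottom.
have [y1 /negP y1x] := not_all_ex_not _ _ not_top.
have [k Jk small] : exists2 k : uplattice x,
    join_irreducible k & (2 * #|upset k| <= #|uplattice x|)%N.
  apply: not_counterexample_small_upset; first by rewrite card_uplattice (card_upset_gt1 y1x).
  by move/minimal; rewrite card_uplattice leqNgt (card_upset_lt xy0).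
rewrite card_upset_uplattice card_uplattice in small.
have [v vI kv] : exists2 v, v \in incomparables x & covers (val k) v.
  apply: (not_join_irreducible_val Jk) => Jval.
  by move: (JI_large _ Jval); rewrite ltnNge (leq_trans small) ?max_card.
have := incomparable_join_upset_large JI_large few vI.
move: vI; rewrite in_incomparables => /andP[nxv _].
by rewrite (join_cover_incomparable kv (valP k) nxv); lia.
Qed.
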